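(* Let $P$ be a finite set of points in $\mathbb{R}^2$ with transmission radii $r(p)>0$, and let $t\in\mathbb{R}^2$. Let $\Gamma_1(t),\ldots,\Gamma_6(t)$ be the six canonical cones of $t$. For $i=1,\ldots,6$, let $Q_i(t)$ be the set of points $p\in P$ with $|pt|\le r(p)$ that are assigned to $\Gamma_i(t)$ (each such point lies in some cone; a point on a boundary between cones is assigned to one of them arbitrarily), and if $Q_i(t)\ne\emptyset$ let $q_i(t)$ be a point of $Q_i(t)$ of minimum transmission radius. Let $Q(t)$ be the set of (at most six) points $q_i(t)$ so obtained. Let $s\in P$ be a point that can reach $t$, and let $d^*(s,t):=\min_{q\in Q(t)}d_{\mathrm{hop}}(s,q)+1$. Then $d_{\mathrm{hop}}(s,t)\le d^*(s,t)\le d_{\mathrm{hop}}(s,t)+1$.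
   Context: The transmission graph $\mathcal{G}_{\mathrm{tr}}(P)$ is the directed graph on $P$ with arc $(p,q)$ iff $|pq|\le r(p)$. For $p,q\in P$, $d_{\mathrm{hop}}(p,q)$ is the minimum number of arcs on a directed path from $p$ to $q$ in $\mathcal{G}_{\mathrm{tr}}(P)$ ($0$ if $p=q$, $\infty$ if no path exists). For $s\in P$ and $t\in\mathbb{R}^2$, $d_{\mathrm{hop}}(s,t):=\min\{d_{\mathrm{hop}}(s,q)+1 : q\in P,\ |qt|\le r(q)\}$, and $s$ can reach $t$ if this is finite. The canonical cones of a point $x$ are the six closed $60$-degree cones with apex $x$ obtained by partitioning the plane around $x$ with a fixed orientation (the same six directions for every apex). *)

From HB Require Import structures.
From mathcomp Require Import all_boot all_order all_algebra.
From mathcomp Require Import boolp reals.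
Set Implicit Arguments. Unset Strict Implicit. Unset Printing Implicit Defensive.
Import Order.TTheory GRing.Theory Num.Theory.
Local Open Scope ring_scope.

Section Defs.
Variable R : realType.
Definition point := (R * R)%type.

Definition dist (p q : point) : R :=
  Num.sqrt ((p.1 - q.1) ^+ 2 + (p.2 - q.2) ^+ 2).

(* ---------- extended naturals: None = infinity ---------- *)
Definition ole (a b : option nat) : bool :=
  match b, a with
  | None, _ => true
  | Some _, None => false
  | Some n, Some m => (m <= n)%N
  end.
Definition omin (a b : option nat) : option nat :=
  match a, b with
  | None, _ => b
  | _, None => a
  | Some m, Some n => Some (minn m n)
  end.
Definition osucc (a : option nat) : option nat :=
  match a with Some n => Some n.+1 | None => None end.

Variables (P : seq point) (r : point -> R).

Definition arc (p q : point) : bool :=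
  [&& p \in P, q \in P & dist p q <= r p].

Definition walk (k : nat) (p q : point) : Prop :=
  exists s : seq point, [/\ p \in P, size s = k, path arc p s & last p s = q].

Lemma walk_ex_bool p q :
  (exists k, walk k p q) -> exists k, `[< walk k p q >].
Proof. by case=> k Hk; exists k; apply/asboolP. Qed.

Definition dhop (p q : point) : option nat :=
  match pselect (exists k, walk k p q) with
  | left H => Some (ex_minn (walk_ex_bool H))
  | right _ => None
  end.

Definition dhop_t (s t : point) : option nat :=
  \big[omin/None]_(q <- P | dist q t <= r q) osucc (dhop s q).

Definition can_reach (s t : point) : Prop := dhop_t s t <> None.

Definition rot60 (u : point) : point :=
  (u.1 / 2 - Num.sqrt 3 / 2 * u.2, Num.sqrt 3 / 2 * u.1 + u.2 / 2).

Definition cone_dir (u0 : point) (k : nat) : point := iter k rot60 u0.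

Definition in_cone (u0 : point) (i : 'I_6) (x y : point) : Prop :=
  exists a b : R, [/\ 0 <= a, 0 <= b,
    y.1 - x.1 = a * (cone_dir u0 i).1 + b * (cone_dir u0 i.+1).1 &
    y.2 - x.2 = a * (cone_dir u0 i).2 + b * (cone_dir u0 i.+1).2].

Definition Qi (assign : point -> 'I_6) (t : point) (i : 'I_6) : seq point :=
  [seq p <- P | (dist p t <= r p) && (assign p == i)].

Definition dstar (q : 'I_6 -> option point) (s : point) : option nat :=
  \big[omin/None]_(i < 6)
     (match q i with Some x => osucc (dhop s x) | None => None end).

End Defs.

From Pilot Require Import Defs.
From HB Require Import structures.
From mathcomp Require Import all_boot all_order all_algebra.
From mathcomp Require Import boolp reals ring lra.

(* Let q' be a point covering t that realises d_hop(s,t), let i be the cone of t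
   to which q' is assigned and x = q_i(t). Two points y, z of one closed 60-degree
   cone with apex t satisfy |yz| <= max(|yt|, |zt|), because the angle at t is at
   most 60 degrees. As |q't| <= r(q') and |xt| <= r(x) <= r(q'), the arc (q', x)
   exists, so d_hop(s,x) <= d_hop(s,q') + 1 and d* <= d_hop(s,t) + 1. Conversely
   every q_i(t) covers t, whence d_hop(s,t) <= d*. *)

Set Implicit Arguments.
Unset Strict Implicit.
Unset Printing Implicit Defensive.

Import Order.TTheory GRing.Theory Num.Theory.
Local Open Scope ring_scope.

Section Cone.
Variable R : realFieldType.

Lemma sum_sub_double_le_max (A C Y : R) : 0 <= A -> 0 <= C -> 0 <= Y ->
  A * C <= 4 * Y ^+ 2 -> A + C - 2 * Y <= A \/ A + C - 2 * Y <= C.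
Proof.
move=> A0 C0 Y0 hAC; have [CA|AC] := lerP C A.
- have : C ^+ 2 <= (2 * Y) ^+ 2 by nra.
  rewrite ler_pXn2r ?nnegrE ?mulr_ge0 // => ?; left; lra.
- have : A ^+ 2 <= (2 * Y) ^+ 2 by nra.
  rewrite ler_pXn2r ?nnegrE ?mulr_ge0 // => ?; right; lra.
Qed.

Definition sqnorm60 (a b : R) := a ^+ 2 + b ^+ 2 + a * b.

Lemma sqnorm60_ge0 (a b : R) : 0 <= a -> 0 <= b -> 0 <= sqnorm60 a b.
Proof. by move=> a0 b0; rewrite !addr_ge0 ?sqr_ge0 ?mulr_ge0. Qed.

(* For y = a u + b v and z = c u + d v with unit u, v at 60 degrees, Y is the inner
   product of y and z, and the Lagrange identity yields |y|^2 |z|^2 <= (2 Y)^2. *)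
Lemma sqnorm60_sub_le (a b c d : R) : 0 <= a -> 0 <= b -> 0 <= c -> 0 <= d ->
  sqnorm60 (a - c) (b - d) <= sqnorm60 a b \/
  sqnorm60 (a - c) (b - d) <= sqnorm60 c d.
Proof.
move=> a0 b0 c0 d0.
pose Y := a * c + b * d + (a * d + b * c) / 2.
have Y0 : 0 <= Y by rewrite /Y !(addr_ge0, divr_ge0, mulr_ge0).
have lagrange : 4 * (sqnorm60 a b * sqnorm60 c d) = 4 * Y ^+ 2 + 3 * (a * d - b * c) ^+ 2.
  by rewrite /sqnorm60 /Y; field.
have cross : (a * d - b * c) ^+ 2 <= 4 * Y ^+ 2.
  rewrite -subr_ge0.
  have -> : 4 * Y ^+ 2 - (a * d - b * c) ^+ 2 =
            (2 * (a * c + b * d + b * c)) * (2 * (a * c + b * d + a * d)).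
    by rewrite /Y; field.
  by rewrite !(mulr_ge0, addr_ge0).
have -> : sqnorm60 (a - c) (b - d) = sqnorm60 a b + sqnorm60 c d - 2 * Y.
  by rewrite /sqnorm60 /Y; field.
by apply: sum_sub_double_le_max; rewrite ?sqnorm60_ge0 //; lra.
Qed.
End Cone.

Section Geometry.
Variable R : realType.

Lemma rot60_sqnorm (w : point R) :
  (rot60 w).1 ^+ 2 + (rot60 w).2 ^+ 2 = w.1 ^+ 2 + w.2 ^+ 2.
Proof.
rewrite /rot60 /=.
transitivity ((w.1 ^+ 2 + w.2 ^+ 2) * (1 + Num.sqrt 3 ^+ 2) / 4); first by field.
by rewrite sqr_sqrtr //; field.
Qed.

Lemma rot60_dot (w : point R) :
  w.1 * (rot60 w).1 + w.2 * (rot60 w).2 = (w.1 ^+ 2 + w.2 ^+ 2) / 2.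
Proof. by rewrite /rot60 /=; field. Qed.

Lemma cone_dir_sqnorm (u0 : point R) k : u0.1 ^+ 2 + u0.2 ^+ 2 = 1 ->
  (cone_dir u0 k).1 ^+ 2 + (cone_dir u0 k).2 ^+ 2 = 1.
Proof. by move=> u0_unit; elim: k => //= k; rewrite rot60_sqnorm. Qed.

Lemma dist_lincomb60 (u v x y : point R) (a b : R) :
  u.1 ^+ 2 + u.2 ^+ 2 = 1 -> v.1 ^+ 2 + v.2 ^+ 2 = 1 ->
  u.1 * v.1 + u.2 * v.2 = 1 / 2 ->
  x.1 - y.1 = a * u.1 + b * v.1 -> x.2 - y.2 = a * u.2 + b * v.2 ->
  dist x y = Num.sqrt (sqnorm60 a b).
Proof.
move=> u_unit v_unit uv e1 e2; rewrite /dist e1 e2; congr Num.sqrt.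
transitivity (a ^+ 2 * (u.1 ^+ 2 + u.2 ^+ 2) + b ^+ 2 * (v.1 ^+ 2 + v.2 ^+ 2)
   + 2 * a * b * (u.1 * v.1 + u.2 * v.2)); first by ring.
by rewrite u_unit v_unit uv /sqnorm60; field.
Qed.

Lemma in_cone_dist_le (u0 : point R) (i : 'I_6) (t y z : point R) :
  u0.1 ^+ 2 + u0.2 ^+ 2 = 1 -> in_cone u0 i t y -> in_cone u0 i t z ->
  dist y z <= dist y t \/ dist y z <= dist z t.
Proof.
move=> u0_unit [a [b [a0 b0 ey1 ey2]]] [c [d [c0 d0 ez1 ez2]]].
have next : cone_dir u0 i.+1 = rot60 (cone_dir u0 i) by rewrite /cone_dir iterS.
rewrite next in ey1 ey2 ez1 ez2; set u := cone_dir u0 i in ey1 ey2 ez1 ez2.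
have u_unit : u.1 ^+ 2 + u.2 ^+ 2 = 1 by exact: cone_dir_sqnorm.
have v_unit := rot60_sqnorm u; rewrite u_unit in v_unit.
have uv := rot60_dot u; rewrite u_unit in uv.
have Eyt := dist_lincomb60 u_unit v_unit uv ey1 ey2.
have Ezt := dist_lincomb60 u_unit v_unit uv ez1 ez2.
have Eyz : dist y z = Num.sqrt (sqnorm60 (a - c) (b - d)).
  by apply: dist_lincomb60 u_unit v_unit uv _ _; lra.
rewrite Eyt Ezt Eyz !ler_sqrt ?sqnorm60_ge0 //.
exact: sqnorm60_sub_le.
Qed.
End Geometry.

Lemma ole_trans a b c : ole a b -> ole b c -> ole a c.
Proof. by case: a b c => [x|] [y|] [z|] //=; apply: leq_trans. Qed.

Lemma ole_osucc a b : ole a b -> ole (osucc a) (osucc b).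
Proof. by case: a b => [x|] [y|]. Qed.

Lemma le_omin a b c : ole c (omin a b) = ole c a && ole c b.
Proof. by case: a b c => [x|] [y|] [z|] //=; rewrite ?andbT // leq_min. Qed.

Lemma omin_lel a b : ole (omin a b) a.
Proof. by case: a b => [x|] [y|] //=; rewrite geq_minl. Qed.

Lemma omin_ler a b : ole (omin a b) b.
Proof. by case: a b => [x|] [y|] //=; rewrite geq_minr. Qed.

Lemma omin_eq a b : omin a b = a \/ omin a b = b.
Proof.
by case: a b => [x|] [y|] /=; auto; rewrite /minn; case: ltnP; auto.
Qed.

Section BigOmin.
Variables (I : eqType) (rs : seq I) (Q : pred I) (F : I -> option nat).

Lemma le_big_omin c :
  (forall i, Q i -> ole c (F i)) -> ole c (\big[omin/None]_(i <- rs | Q i) F i).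
Proof. by move=> leF; elim/big_ind: _ => // a b; rewrite le_omin => -> ->. Qed.

Lemma big_omin_le x : x \in rs -> Q x ->
  ole (\big[omin/None]_(i <- rs | Q i) F i) (F x).
Proof.
elim: rs => // y s IH; rewrite inE big_cons => /orP[/eqP <- | xs] Qx.
  by rewrite Qx omin_lel.
by case: ifP => _; [apply: ole_trans (omin_ler _ _) _|]; apply: IH.
Qed.

Lemma big_omin_attained :
  \big[omin/None]_(i <- rs | Q i) F i = None \/
  exists2 x, (x \in rs) && Q x & \big[omin/None]_(i <- rs | Q i) F i = F x.
Proof.
rewrite big_seq_cond; elim/big_ind: _; [by left| |by right; exists i].
move=> a b Ha Hb; case: (omin_eq a b) => ->; [exact: Ha | exact: Hb].
Qed.
End BigOmin.

Section HopDistance.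
Variables (R : realType) (P : seq (point R)) (r : point R -> R).

Lemma walk_rcons k p x y : walk P r k p x -> Defs.arc P r x y -> walk P r k.+1 p y.
Proof.
case=> w [pP sw pw lw] xy; exists (rcons w y).
by rewrite size_rcons sw rcons_path pw lw xy last_rcons.
Qed.

Lemma dhop_walk p x k : dhop P r p x = Some k -> walk P r k p x.
Proof. by rewrite /dhop; case: pselect => // H [<-]; case: ex_minnP => m /asboolP. Qed.

Lemma dhop_le_walk p x k : walk P r k p x -> ole (dhop P r p x) (Some k).
Proof.
move=> pxk; rewrite /dhop; case: pselect => [H|[]]; last by exists k.
by case: ex_minnP => m _; apply; apply/asboolP.
Qed.

Lemma dhop_arc p x y : Defs.arc P r x y -> ole (dhop P r p y) (osucc (dhop P r p x)).
Proof.
move=> xy; case px: (dhop P r p x) => [k|] //=.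
exact/dhop_le_walk/(walk_rcons (dhop_walk px) xy).
Qed.

Lemma dhop_t_le s t x : x \in P -> dist x t <= r x ->
  ole (dhop_t P r s t) (osucc (dhop P r s x)).
Proof. exact: big_omin_le. Qed.

Lemma dhop_t_attained s t : can_reach P r s t ->
  exists2 x, (x \in P) && (dist x t <= r x) & dhop_t P r s t = osucc (dhop P r s x).
Proof.
by rewrite /can_reach /dhop_t; case: (big_omin_attained P (fun x => dist x t <= r x) (fun x => osucc (dhop P r s x))).
Qed.

Lemma dstar_le (q : 'I_6 -> option (point R)) s i x : q i = Some x ->
  ole (dstar P r q s) (osucc (dhop P r s x)).
Proof.
move=> qi; have := big_omin_le (fun i => match q i with
  | Some x => osucc (dhop P r s x) | None => None end) (mem_index_enum i) (erefl true).
by rewrite qi.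
Qed.
End HopDistance.

Section ConeMinimum.
Variables (R : realType) (P : seq (point R)) (r : point R -> R).
Variables (t u0 : point R) (assign : point R -> 'I_6).
Hypothesis u0_unit : u0.1 ^+ 2 + u0.2 ^+ 2 = 1.
Hypothesis assign_cone :
  forall p, p \in P -> dist p t <= r p -> in_cone u0 (assign p) t p.

Lemma mem_Qi i x :
  (x \in Qi P r assign t i) = [&& x \in P, dist x t <= r x & assign x == i].
Proof. by rewrite mem_filter andbC andbA. Qed.

Lemma Qi_arc i x y : x \in Qi P r assign t i -> y \in Qi P r assign t i ->
  r x <= r y -> Defs.arc P r y x.
Proof.
rewrite !mem_Qi => /and3P[xP xt /eqP xi] /and3P[yP yt /eqP yi] rxy.
rewrite /Defs.arc yP xP /=.
have xcone := assign_cone xP xt; have ycone := assign_cone yP yt.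
rewrite xi in xcone; rewrite yi in ycone.
case: (in_cone_dist_le u0_unit ycone xcone) => [yx|yx].
  exact: le_trans yx yt.
exact: le_trans yx (le_trans xt rxy).
Qed.
End ConeMinimum.

Theorem mainTheorem6 (R : realType) (P : seq (point R)) (r : point R -> R)
  (t : point R) (u0 : point R)
  (assign : point R -> 'I_6) (q : 'I_6 -> option (point R)) (s : point R) :
  (forall p, p \in P -> 0 < r p) ->
  u0.1 ^+ 2 + u0.2 ^+ 2 = 1 ->
  (forall p, p \in P -> dist p t <= r p -> in_cone u0 (assign p) t p) ->
  (forall i, match q i with
             | None => Qi P r assign t i = [::]
             | Some x => x \in Qi P r assign t i /\
                         (forall y, y \in Qi P r assign t i -> r x <= r y)
             end) ->
  s \in P ->
  can_reach P r s t ->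
  ole (dhop_t P r s t) (dstar P r q s) /\
  ole (dstar P r q s) (osucc (dhop_t P r s t)).
Proof.
move=> _ u0_unit assign_cone qmin _ reach; split.
  apply: le_big_omin => i _; have := qmin i.
  case: (q i) => [x [+ _] | _]; last by case: dhop_t.
  by rewrite mem_Qi => /and3P[xP xt _]; apply: dhop_t_le.
have [y /andP[yP yt] ->] := dhop_t_attained reach.
have yQ : y \in Qi P r assign t (assign y) by rewrite mem_Qi yP yt eqxx.
have := qmin (assign y); case qy: (q (assign y)) => [x|] /=; last first.
  by move=> Qnil; rewrite Qnil in yQ.
case=> xQ xmin; apply: ole_trans (dstar_le P r s qy) (ole_osucc _).
exact/dhop_arc/(Qi_arc u0_unit assign_cone xQ yQ (xmin _ yQ)).
Qed.
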